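(* Let $s,t,D\ge1$ be integers and let $\mathcal G=\{G_1,\dots,G_t\}$ be an $s$-joined graph family on vertex set $V$; write $U=V\times[t]$. Suppose $Y_0\subseteq V$ satisfies $|Y_0|\ge3sD+4s$. Then there exists $U_0\subseteq U$ with $|U_0|\le s$ such that every $X\subseteq U\setminus U_0$ with $|X|\le2s$ satisfies $|N^*(X,Y_0\setminus U_0|_V)|\ge D|X|$.
   Context: A graph family $\mathcal G=\{G_1,\dots,G_t\}$ is a collection of $t$ simple graphs on a common finite vertex set $V$. For $X\subseteq V\times[t]$, $\Gamma_{\mathcal G}(X)=\bigcup_{(v,i)\in X}\{u\in V:uv\in E(G_i)\}$. The family is $s$-joined if for all $X\subseteq V\times[t]$ and $Y\subseteq V$ with $|X|\ge s$ and $|Y|\ge s$ there exist $(v,i)\in X$ and $y\in Y$ with $vy\in E(G_i)$. For $X\subseteq V\times[t]$, $X|_V=\{v\in V:(v,i)\in X\text{ for some }i\}$, and for $Y\subseteq V$, $N^*(X,Y)=(\Gamma_{\mathcal G}(X)\cap Y)\setminus X|_V$. *)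

From mathcomp Require Import all_boot.
Set Implicit Arguments. Unset Strict Implicit. Unset Printing Implicit Defensive.

(* A graph family on a common finite vertex set V: t simple graphs,
   each given as a symmetric irreflexive relation on V.  The index set
   [t] = {1,...,t} is represented by 'I_t. *)
Definition simple_graph (V : finType) (e : rel V) : Prop :=
  symmetric e /\ irreflexive e.

Definition graph_family (V : finType) (t : nat) (G : 'I_t -> rel V) : Prop :=
  forall i, simple_graph (G i).

Definition Gamma (V : finType) (t : nat) (G : 'I_t -> rel V)
  (X : {set V * 'I_t}) : {set V} :=
  [set u : V | [exists x in X, G x.2 x.1 u]].

Definition s_joined (V : finType) (t : nat) (G : 'I_t -> rel V) (s : nat) : Prop :=
  forall (X : {set V * 'I_t}) (Y : {set V}),
    s <= #|X| -> s <= #|Y| ->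
    exists2 x, x \in X & exists2 y, y \in Y & G x.2 x.1 y.

Definition restrV (V : finType) (t : nat) (X : {set V * 'I_t}) : {set V} :=
  [set v : V | [exists i : 'I_t, (v, i) \in X]].

Definition Nstar (V : finType) (t : nat) (G : 'I_t -> rel V)
  (X : {set V * 'I_t}) (Y : {set V}) : {set V} :=
  (Gamma G X :&: Y) :\: restrV X.

From mathcomp Require Import all_boot.
From mathcomp Require Import zify.

(* Call Z sparse when |Z| <= 3s and |N^*(Z, Y0)| <= D|Z|, and take a sparse
   set U0 of maximum size.  If |U0| >= s then, the family being s-joined,
   fewer than s vertices of Y0 miss Gamma(U0), so
   |Y0| < s + |U0| + |N^*(U0, Y0)| <= 4s + 3sD, which is impossible; hence
   |U0| < s.  If some X outside U0 with |X| <= 2s expanded by less than D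
   into Y0 \ U0|_V, then U0 :|: X would be a larger sparse set, since
   N^* is subadditive once the second argument avoids U0|_V. *)

Section NstarCounting.

Context {V : finType} {t : nat} (G : 'I_t -> rel V).
Implicit Types (X Z U : {set V * 'I_t}) (Y : {set V}).

Lemma card_restrV Z : #|restrV Z| <= #|Z|.
Proof.
apply: leq_trans (leq_imset_card (fun x : V * 'I_t => x.1) Z).
apply: subset_leq_card; apply/subsetP => v; rewrite inE => /existsP [i Zvi].
by apply/imsetP; exists (v, i).
Qed.

Lemma Nstar0 Y : Nstar G set0 Y = set0.
Proof.
apply/setP => y; rewrite !inE; apply/negP => /andP [_ /andP [/existsP [x]]].
by rewrite inE.
Qed.

Lemma subset_Nstar_cover Y Z :
  Y \subset (Y :\: Gamma G Z) :|: restrV Z :|: Nstar G Z Y.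
Proof.
apply/subsetP => y Yy; rewrite /Nstar !in_setU !in_setD !in_setI Yy /=.
by case: (y \in Gamma G Z); case: (y \in restrV Z).
Qed.

Lemma card_setD_Gamma_lt s Y Z :
  s_joined G s -> s <= #|Z| -> #|Y :\: Gamma G Z| < s.
Proof.
move=> joined sZ; rewrite ltnNge; apply/negP => sY.
have [x Zx [y Yy xy]] := joined Z _ sZ sY.
move: Yy; rewrite !inE => /andP [/negP outside _]; apply: outside.
by apply/existsP; exists x; rewrite Zx.
Qed.

Lemma card_lt_Nstar s Y Z :
  s_joined G s -> s <= #|Z| -> #|Y| < s + #|Z| + #|Nstar G Z Y|.
Proof.
move=> joined sZ.
have := card_setD_Gamma_lt _ Y _ joined sZ.
have := subset_leq_card (subset_Nstar_cover Y Z).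
have := (leq_card_setU ((Y :\: Gamma G Z) :|: restrV Z) (Nstar G Z Y)).1.
have := (leq_card_setU (Y :\: Gamma G Z) (restrV Z)).1.
have := card_restrV Z.
lia.
Qed.

Lemma Nstar_setU Y U X :
  Nstar G (U :|: X) Y \subset Nstar G U Y :|: Nstar G X (Y :\: restrV U).
Proof.
apply/subsetP => y; rewrite /Nstar /Gamma /restrV !inE.
case/andP => notUX /andP [/existsP [x /andP [UXx xy]] Yy].
have notU : ~~ [exists i, (y, i) \in U].
  apply: contra notUX => /existsP [i Uyi].
  by apply/existsP; exists i; rewrite inE Uyi.
have notX : ~~ [exists i, (y, i) \in X].
  apply: contra notUX => /existsP [i Xyi].
  by apply/existsP; exists i; rewrite inE Xyi orbT.
rewrite notU Yy /= andbT; move: UXx; rewrite inE => /orP [Ux|Xx].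
  by rewrite (introT existsP) //; exists x; rewrite Ux.
by rewrite notX orbC (introT existsP) //; exists x; rewrite Xx.
Qed.

Definition sparse (Y : {set V}) (m D : nat) (Z : {set V * 'I_t}) : bool :=
  (#|Z| <= m) && (#|Nstar G Z Y| <= D * #|Z|).

Lemma exists_max_sparse Y m D :
  exists2 U, sparse Y m D U & forall Z, sparse Y m D Z -> #|Z| <= #|U|.
Proof.
have sparse0 : sparse Y m D set0 by rewrite /sparse Nstar0 !cards0.
by case: (arg_maxnP (fun Z => #|Z|) sparse0) => U; exists U.
Qed.

Lemma max_sparse_expands Y m D U X :
  sparse Y m D U -> (forall Z, sparse Y m D Z -> #|Z| <= #|U|) ->
  X \subset ~: U -> #|U| + #|X| <= m ->
  D * #|X| <= #|Nstar G X (Y :\: restrV U)|.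
Proof.
move=> /andP [_ sparseU] Umax XU UXm; rewrite leqNgt; apply/negP => small.
have cardUX : #|U :|: X| = #|U| + #|X|.
  rewrite cardsU; suff /eqP -> : U :&: X == set0 by rewrite cards0 subn0.
  by rewrite setIC setI_eq0 disjoints_subset.
have /Umax : sparse Y m D (U :|: X).
  rewrite /sparse cardUX UXm mulnDr /=.
  apply: leq_trans (subset_leq_card (Nstar_setU Y U X)) _.
  apply: leq_trans (leq_card_setU _ _).1 _.
  exact: leq_add sparseU (ltnW small).
rewrite cardUX -{2}[#|U|]addn0 leq_add2l leqn0 => /eqP X0.
by rewrite X0 muln0 in small.
Qed.

End NstarCounting.

Theorem proposition3p1 (V : finType) (s t D : nat) (G : 'I_t -> rel V)
  (Y0 : {set V}) :
  1 <= s -> 1 <= t -> 1 <= D ->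
  graph_family G -> s_joined G s ->
  3 * s * D + 4 * s <= #|Y0| ->
  exists U0 : {set V * 'I_t},
    #|U0| <= s /\
    forall X : {set V * 'I_t},
      X \subset ~: U0 -> #|X| <= 2 * s ->
      D * #|X| <= #|Nstar G X (Y0 :\: restrV U0)|.
Proof.
move=> _ _ _ _ joined bigY0.
have [U0 sparseU0 U0max] := exists_max_sparse G Y0 (3 * s) D.
have smallU0 : #|U0| < s.
  rewrite ltnNge; apply/negP => sU0.
  have := card_lt_Nstar G _ Y0 _ joined sU0.
  move: sparseU0 => /andP [U0_3s NU0].
  have : D * #|U0| <= D * (3 * s) by rewrite leq_mul2l U0_3s orbT.
  lia.
exists U0; split; first exact: ltnW.
move=> X XU0 X2s; apply: max_sparse_expands sparseU0 U0max XU0 _.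
lia.
Qed.
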